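(* Let $G$ be a digraph and $f$ a discrete Morse function on $G$ such that every vertex $v$ with $f(v)=0$ has out-degree $1$ and in-degree $1$. Then for every pair $(\alpha,\beta)\in\mathcal M(G,f)$ there is a vertex $v$ with $f(v)=0$, with unique in-neighbour $u$ and unique out-neighbour $w$ (so $u\to v\to w$), such that one of the following holds: (1) $\alpha=x_1\cdots x_p\,u\,w\,y_1\cdots y_q$ and $\beta=x_1\cdots x_p\,u\,v\,w\,y_1\cdots y_q$ for some (possibly empty) sequences $x_1\cdots x_p$, $y_1\cdots y_q$; (2) $\alpha$ ends at $u$ and $\beta=\alpha v$ (i.e. $\beta=\cdots u\,v$); (3) $\alpha$ starts at $w$ and $\beta=v\alpha$ (i.e. $\beta=v\,w\cdots$).
   Context: A digraph $G=(V,E)$ consists of a set $V$ and $E\subseteq(V\times V)\setminus\{(v,v)\}$; $(u,v)\in E$ is written $u\to v$. The out-degree (in-degree) of $v$ is the number of edges starting (ending) at $v$. An allowed elementary $n$-path is a sequence $v_0\cdots v_n$ of vertices with $v_{i-1}\to v_i\in E$ for $1\le i\le n$. For allowed elementary paths, $\gamma'<\gamma$ means $\gamma'$ is obtained from $\gamma$ by deleting some entries. A map $f:V\to[0,+\infty)$ is a discrete Morse function on $G$ if for every allowed elementary path $v_0\cdots v_n$: (i) there is at most one index $i$ with $f(v_i)=0$ such that $v_0\cdots v_{i-1}v_{i+1}\cdots v_n$ is an allowed elementary $(n-1)$-path; (ii) there is at most one vertex $u$ with $f(u)=0$ such that for some $-1\le j\le n$ the sequence $v_0\cdots v_juv_{j+1}\cdots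 v_n$ (meaning $uv_0\cdots v_n$ if $j=-1$, $v_0\cdots v_nu$ if $j=n$) is an allowed elementary $(n+1)$-path. Set $f(v_0\cdots v_n)=\sum_if(v_i)$. $\mathcal M(G,f)$ is the set of pairs $(\alpha,\beta)$ with $\alpha$ an allowed elementary $n$-path, $\beta$ an allowed elementary $(n+1)$-path for some $n\ge0$, $\alpha<\beta$ and $f(\alpha)=f(\beta)$. *)

From mathcomp Require Import all_boot all_order all_algebra.
Set Implicit Arguments. Unset Strict Implicit. Unset Printing Implicit Defensive.
Import Order.TTheory GRing.Theory Num.Theory.
Local Open Scope ring_scope.

Definition digraph (V : finType) (E : rel V) : Prop := irreflexive E.

Definition outdeg (V : finType) (E : rel V) (v : V) : nat := #|[set x | E v x]|.
Definition indeg (V : finType) (E : rel V) (v : V) : nat := #|[set x | E x v]|.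

(* allowed elementary path v_0 ... v_n (n = size s - 1), nonempty *)
Definition allowed (V : finType) (E : rel V) (s : seq V) : bool :=
  if s is x :: t then path E x t else false.

Definition del_at (V : Type) (i : nat) (s : seq V) : seq V := take i s ++ drop i.+1 s.
Definition ins_at (V : Type) (j : nat) (u : V) (s : seq V) : seq V := take j s ++ u :: drop j s.

Definition path_weight (R : numDomainType) (V : finType) (f : V -> R) (s : seq V) : R :=
  \sum_(x <- s) f x.

Definition discrete_morse (R : numDomainType) (V : finType) (E : rel V) (f : V -> R) : Prop :=
  [/\ (forall v, 0 <= f v),
  (forall (x0 : V) (s : seq V), allowed E s ->
     forall i1 i2 : nat,
       (i1 < size s)%N -> f (nth x0 s i1) = 0 -> allowed E (del_at i1 s) ->
       (i2 < size s)%N -> f (nth x0 s i2) = 0 -> allowed E (del_at i2 s) ->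
       i1 = i2) &
  (* (ii): at most one vertex u with f(u) = 0 that can be inserted somewhere
     (positions 0..n+1, i.e. j = -1..n in the paper) to give an allowed path *)
  (forall (s : seq V), allowed E s ->
     forall u1 u2 : V,
       f u1 = 0 -> (exists j, (j <= size s)%N /\ allowed E (ins_at j u1 s)) ->
       f u2 = 0 -> (exists j, (j <= size s)%N /\ allowed E (ins_at j u2 s)) ->
       u1 = u2)].

Definition morse_pair (R : numDomainType) (V : finType) (E : rel V) (f : V -> R)
  (a b : seq V) : Prop :=
  [/\ allowed E a, allowed E b, size b = (size a).+1, subseq a b
    & path_weight f a = path_weight f b].

From mathcomp Require Import all_boot all_order all_algebra.
Import Order.TTheory GRing.Theory Num.Theory.
Local Open Scope ring_scope.

(* [b] is [a] with one vertex [v] inserted, and equal weights force [f v = 0].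
   Since [v] then has a unique in-neighbour [u] and out-neighbour [w], the
   entries of [b] around [v], which exist because [a] is nonempty, must be [u]
   and [w]. *)

Lemma subseq_sizeS {T : eqType} {a b : seq T} :
  subseq a b -> size b = (size a).+1 ->
  exists xs ys v, a = xs ++ ys /\ b = xs ++ v :: ys.
Proof.
elim: b a => [|y b IHb] [|x a] //=.
  by move=> _ [] /eqP/nilP ->; exists [::], [::], y.
case: eqP => [-> sub_ab [] size_ba | _ sub_xab [] size_ba].
  have [xs [ys [v [-> ->]]]] := IHb a sub_ab size_ba.
  by exists (y :: xs), ys, v.
have [_] := size_subseq_leqif sub_xab.
rewrite /= size_ba eqxx => /esym/eqP <-.
by exists [::], (x :: a), y.
Qed.

Lemma path_weight_ins_eq0 (R : numDomainType) (V : finType) (f : V -> R)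
    (xs ys : seq V) (v : V) :
  path_weight f (xs ++ ys) = path_weight f (xs ++ v :: ys) -> f v = 0.
Proof.
rewrite /path_weight !big_cat big_cons /= => /addrI/esym/eqP.
by rewrite -subr_eq0 addrK => /eqP.
Qed.

Lemma cards_eq1_uniq {T : finType} {P : pred T} :
  #|[set x | P x]| = 1%N -> exists w, P w /\ forall x, P x -> x = w.
Proof.
move=> /eqP/cards1P[w setPw].
have memP x : P x = (x == w) by rewrite -in_set1 -setPw inE.
by exists w; split=> [|x]; rewrite memP // => /eqP.
Qed.

Lemma allowed_edge (V : finType) (E : rel V) (s1 s2 : seq V) (x y : V) :
  allowed E (s1 ++ x :: y :: s2) -> E x y.
Proof.
case: s1 => [|h t] /=; first by case/andP.
by rewrite cat_path => /andP[_] /= /and3P[].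
Qed.

Section Insertion.

Context {V : finType} {E : rel V} {u v w : V}.
Hypothesis in_v_uniq : forall x, E x v -> x = u.
Hypothesis out_v_uniq : forall x, E v x -> x = w.

Lemma allowed_ins_shape {xs ys : seq V} :
  allowed E (xs ++ ys) -> allowed E (xs ++ v :: ys) ->
  [\/ (exists xs' ys' : seq V,
         xs ++ ys = xs' ++ u :: w :: ys' /\
         xs ++ v :: ys = xs' ++ u :: v :: w :: ys'),
      (exists xs' : seq V,
         xs ++ ys = rcons xs' u /\ xs ++ v :: ys = rcons (xs ++ ys) v)
    | (exists ys' : seq V, xs ++ ys = w :: ys' /\ xs ++ v :: ys = v :: xs ++ ys)].
Proof.
case/lastP: xs => [|xs x] /= a_ok b_ok.
  case: ys a_ok b_ok => [|y ys] //= _ /andP[/out_v_uniq-> _].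
  by constructor 3; exists ys.
have /in_v_uniq def_x : E x v by apply: (@allowed_edge _ _ xs ys); rewrite -cat_rcons.
rewrite {x}def_x !cat_rcons in a_ok b_ok *.
case: ys a_ok b_ok => [|y ys] a_ok b_ok.
  by constructor 2; exists xs; rewrite -!cats1 -catA.
have /out_v_uniq def_y : E v y by apply: (@allowed_edge _ _ (rcons xs u) ys); rewrite cat_rcons.
by rewrite def_y; constructor 1; exists xs, ys.
Qed.

End Insertion.

Theorem lemma6p1 (R : realFieldType) (V : finType) (E : rel V) (f : V -> R) :
  digraph E -> discrete_morse E f ->
  (forall v, f v = 0 -> outdeg E v = 1%N /\ indeg E v = 1%N) ->
  forall a b : seq V, morse_pair E f a b ->
  exists u v w : V,
    [/\ f v = 0, E u v /\ E v w,
        (forall x, E x v -> x = u), (forall x, E v x -> x = w) &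
        [\/ (exists xs ys : seq V,
               a = xs ++ u :: w :: ys /\ b = xs ++ u :: v :: w :: ys),
             (exists xs : seq V, a = rcons xs u /\ b = rcons a v)
           | (exists ys : seq V, a = w :: ys /\ b = v :: a)]].
Proof.
move=> _ _ critical_deg a b [a_ok b_ok size_ba sub_ab weight_ab].
have [xs [ys [v [def_a def_b]]]] := subseq_sizeS sub_ab size_ba.
have fv0 : f v = 0 by move: weight_ab; rewrite def_a def_b => /path_weight_ins_eq0.
have [outdeg_v indeg_v] := critical_deg v fv0.
have [w [Evw out_v_uniq]] := cards_eq1_uniq outdeg_v.
have [u [Euv in_v_uniq]] := cards_eq1_uniq indeg_v.
exists u, v, w; split=> //.
subst a b.
exact (allowed_ins_shape in_v_uniq out_v_uniq a_ok b_ok).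
Qed.
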